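(* Let $\varepsilon>0$ be such that $1/\varepsilon\ge 3$ is an integer, let $I$ be an input of offline Ordered Open End Bin Packing, and let $\mathrm{OPT}$ be an optimal solution for $I$ with cost $\mathrm{opt}$. Then there is a feasible solution $\mathrm{OPT}'$ of cost at most $(1+\varepsilon^2)\,\mathrm{opt}+1$ such that every exceeding item of a bin of $\mathrm{OPT}'$ has size at least $\varepsilon^2$.
   Context: Ordered Open End Bin Packing (offline): the input is a sequence of items $1,\dots,n$ with sizes in $(0,1]$. A feasible solution partitions the items into bins such that for every bin, the total size of all its items except the one of maximum index is strictly smaller than $1$ (i.e., items are added to a bin in index order, and an item may be added only while the bin's current total size is strictly below $1$). The cost is the number of bins. For a bin $B$ of a feasible solution, if the total size of the items in $B$ is at least $1$, the exceeding item of $B$ is the item of maximum index in $B$; if the total size of $B$ is strictly below $1$, $B$ has no exceeding item. *)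

From mathcomp Require Import all_boot all_order all_algebra.
From mathcomp Require Import reals.
Set Implicit Arguments. Unset Strict Implicit. Unset Printing Implicit Defensive.
Import Order.TTheory GRing.Theory Num.Theory.
Local Open Scope ring_scope.

(* An instance: n items indexed by 'I_n (index order = order of 'I_n),
   item i has size a i. A solution is a partition P of the item set into
   (nonempty, pairwise disjoint) bins; its cost is #|P|. *)

Definition oeb_input (R : realType) (n : nat) (a : 'I_n -> R) : Prop :=
  forall i, 0 < a i <= 1.

Definition max_item (n : nat) (B : {set 'I_n}) (j : 'I_n) : Prop :=
  j \in B /\ forall i, i \in B -> (i <= j)%N.

Definition oeb_feasible (R : realType) (n : nat) (a : 'I_n -> R)
    (P : {set {set 'I_n}}) : Prop :=
  partition P [set: 'I_n] /\
  forall B, B \in P -> forall j, max_item B j ->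
    \sum_(i in B | i != j) a i < 1.

Definition oeb_optimal (R : realType) (n : nat) (a : 'I_n -> R)
    (P : {set {set 'I_n}}) : Prop :=
  oeb_feasible a P /\ forall Q, oeb_feasible a Q -> (#|P| <= #|Q|)%N.

Definition exceeding_item (R : realType) (n : nat) (a : 'I_n -> R)
    (B : {set 'I_n}) (j : 'I_n) : Prop :=
  1 <= \sum_(i in B) a i /\ max_item B j.

From mathcomp Require Import all_boot all_order all_algebra.
From mathcomp Require Import reals.
From mathcomp Require Import zify.
Import Order.TTheory GRing.Theory Num.Theory.
Set Implicit Arguments. Unset Strict Implicit. Unset Printing Implicit Defensive.
Local Open Scope ring_scope.

(* Let K = 1/eps^2.  Every bin of OPT has at most one exceeding item; take out those
   exceeding items whose size is below 1/K.  What remains of such a bin is still feasible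
   (a subset of a feasible bin is feasible), and it either falls below total size 1 or keeps
   its exceeding item, which is then large.  The removed items, at most opt of them, are
   repacked K at a time into new bins of total size < K * (1/K) = 1, so these bins have no
   exceeding item, and there are at most ceil(opt/K) <= eps^2 opt + 1 of them. *)

Lemma ler_sum_subset (R : numDomainType) (T : finType) (A B : pred T) (F : T -> R) :
  (forall i, 0 <= F i) -> {subset A <= B} ->
  \sum_(i in A) F i <= \sum_(i in B) F i.
Proof.
move=> F_ge0 sAB; rewrite [leLHS]big_mkcond [leRHS]big_mkcond /=.
apply: ler_sum => i _; case: ifP => [/sAB -> // | _].
by case: ifP.
Qed.

Lemma partition_chunks (T : finType) (S : {set T}) (K : nat) : (0 < K)%N ->
  exists Q : {set {set T}},
    [/\ partition Q S, {in Q, forall B : {set T}, (#|B| <= K)%N} & (#|Q| * K < #|S| + K)%N].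
Proof.
move=> K_gt0; set s := enum S; pose f x := (index x s %/ K)%N.
pose c := ((#|S| + K.-1) %/ K)%N.
have f_lt_c x : x \in S -> (f x < c)%N.
  move=> Sx; have idx_lt : (index x s < #|S|)%N by rewrite cardE index_mem mem_enum.
  have := leq_divM (index x s) K.
  by rewrite /c leq_divRL // /f; move: (index x s %/ K)%N => q; lia.
exists (preim_partition f S); split; first exact: preim_partitionP.
- move=> _ /imsetP[x _ ->]; set B := [set y in S | _].
  pose r y : 'I_K := Ordinal (ltn_pmod (index y s) K_gt0).
  have r_inj : {in B &, injective r}.
    move=> y y'; rewrite !inE => /andP[Sy /eqP fy] /andP[Sy' /eqP fy'] /(congr1 val) /= mod_eq.
    apply: (index_inj y (s := s)); rewrite ?mem_enum //.
    by rewrite (divn_eq (index y s) K) (divn_eq (index y' s) K) mod_eq -/(f y) -/(f y') -fy -fy'.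
  by rewrite -(card_in_imset r_inj) (leq_trans (max_card _)) ?card_ord.
- have sub : preim_partition f S \subset [set [set y in S | val q == f y] | q : 'I_c].
    apply/subsetP => _ /imsetP[x Sx ->]; apply/imsetP.
    by exists (Ordinal (f_lt_c x Sx)).
  have card_Q : (#|preim_partition f S| <= c)%N.
    by rewrite (leq_trans (subset_leq_card sub)) // (leq_trans (leq_imset_card _ _)) ?card_ord.
  apply: leq_ltn_trans (leq_mul card_Q (leqnn K)) _.
  by apply: leq_ltn_trans (leq_divM _ _) _; rewrite ltn_add2l prednK.
Qed.

Lemma graft_partition (T : finType) (P Q : {set {set T}}) (D S : {set T}) :
  partition P D -> partition Q S -> S \subset D ->
  exists P' : {set {set T}},
    [/\ partition P' D, (#|P'| <= #|P| + #|Q|)%N &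
        {in P', forall B, B \in Q \/ exists2 C, C \in P & B = C :\: S}].
Proof.
move=> partP partQ sSD.
have /and3P[/eqP coverP _ _] := partP; have /and3P[/eqP coverQ _ _] := partQ.
pose h x := if x \in S then inr (pblock Q x) else inl (pblock P x).
exists (preim_partition h D); split; first exact: preim_partitionP.
- have sub : h @: D \subset inl @: P :|: inr @: Q.
    apply/subsetP => _ /imsetP[x Dx ->]; rewrite /h inE.
    by case: ifP => Sx; apply/orP; [right | left]; rewrite imset_f ?pblock_mem ?coverQ ?coverP.
  rewrite /preim_partition /equivalence_partition.
  rewrite (imset_comp (fun l => [set y in D | l == h y]) h).
  apply: leq_trans (leq_imset_card _ _) _.
  apply: leq_trans (subset_leq_card sub) _.
  by apply: leq_trans (leq_card_setU _ _).1 _; rewrite leq_add ?leq_imset_card.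
- move=> _ /imsetP[x Dx ->]; case Sx: (x \in S); [left | right].
    rewrite -(preim_partition_pblock partQ).
    have -> : [set y in D | h x == h y] = [set y in S | pblock Q x == pblock Q y].
      apply/setP => y; rewrite !inE /h Sx.
      by case Sy: (y \in S); rewrite ?(subsetP sSD y Sy) ?andbF.
    exact: imset_f.
  exists [set y in D | pblock P x == pblock P y].
    by rewrite -[in X in _ \in X](preim_partition_pblock partP); apply: imset_f.
  apply/setP => y; rewrite !inE /h Sx.
  by case Sy: (y \in S); rewrite ?andbF // andbC.
Qed.

Section Bins.

Variables (R : realType) (n : nat) (a : 'I_n -> R).

Definition bin_feasible (B : {set 'I_n}) : Prop :=
  forall j, max_item B j -> \sum_(i in B | i != j) a i < 1.

Definition exceedingb (B : {set 'I_n}) (j : 'I_n) : bool :=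
  [&& 1 <= \sum_(i in B) a i, j \in B & [forall i in B, (i <= j)%N]].

Hypothesis a_ge0 : forall i, 0 <= a i.

Lemma max_item_uniq (B : {set 'I_n}) j j' : max_item B j -> max_item B j' -> j = j'.
Proof.
by move=> [jB le_j] [j'B le_j']; apply/val_inj/eqP; rewrite eqn_leq le_j' ?le_j.
Qed.

Lemma max_item_exists (B : {set 'I_n}) x : x \in B -> exists j, max_item B j.
Proof. by move=> Bx; case: (arg_maxnP val Bx) => j; exists j. Qed.

Lemma exceedingP (B : {set 'I_n}) j : reflect (exceeding_item a B j) (exceedingb B j).
Proof.
apply: (iffP and3P) => [[heavy jB /forallP le_j] | [heavy [jB le_j]]].
  by split=> //; split=> // i iB; apply: (implyP (le_j i)).
by split=> //; apply/forallP => i; apply/implyP/le_j.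
Qed.

Lemma bin_feasible_light (B : {set 'I_n}) : \sum_(i in B) a i < 1 -> bin_feasible B.
Proof.
move=> light j _; apply: le_lt_trans light.
by apply: ler_sum_subset => // i /andP[].
Qed.

Lemma bin_feasibleS (B C : {set 'I_n}) : B \subset C -> bin_feasible C -> bin_feasible B.
Proof.
move=> sBC feasC j [jB le_j].
have [m [mC le_m] ] := max_item_exists (subsetP sBC j jB).
apply: le_lt_trans (feasC m (conj mC le_m)).
apply: ler_sum_subset => // i /andP[iB ne_ij]; apply/andP; split.
  exact: (subsetP sBC).
apply: contraNneq ne_ij => eq_im; apply/eqP/(max_item_uniq (B := B)) => //.
by split=> // k kB; rewrite eq_im; apply/le_m/(subsetP sBC).
Qed.

Lemma sum_small_items_lt1 (K : nat) (B : {set 'I_n}) :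
  B != set0 -> (#|B| <= K)%N -> {in B, forall i, a i < K%:R^-1} ->
  \sum_(i in B) a i < 1.
Proof.
case/set0Pn => x Bx card_B small.
have K_gt0 : (0 < K)%N by apply: leq_trans card_B; apply/card_gt0P; exists x.
apply: (@lt_le_trans _ _ (\sum_(i in B) K%:R^-1)).
  by apply: ltr_sum => [|i /small]; first by apply/hasP; exists x; rewrite ?mem_index_enum.
by rewrite sumr_const -[_ *+ #|B|]mulr_natr mulrC ler_pdivrMr ?ltr0n // mul1r ler_nat.
Qed.

End Bins.

Section SmallExceeding.

Variables (R : realType) (n : nat) (a : 'I_n -> R) (K : nat) (P : {set {set 'I_n}}).
Hypothesis a_ge0 : forall i, 0 <= a i.
Hypothesis partP : partition P [set: 'I_n].

Definition small_exceeding_items : {set 'I_n} :=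
  [set j | exceedingb a (pblock P j) j && (a j < K%:R^-1)].

Local Notation T := small_exceeding_items.

Lemma mem_small_exceeding C j : C \in P -> j \in C ->
  (j \in T) = exceedingb a C j && (a j < K%:R^-1).
Proof.
by case/and3P: partP => _ trivP _ CP jC; rewrite inE (def_pblock trivP CP jC).
Qed.

Lemma card_small_exceeding : (#|T| <= #|P|)%N.
Proof.
have /and3P[/eqP coverP _ _] := partP.
have blockP x : pblock P x \in P by rewrite pblock_mem ?coverP.
rewrite -(@card_in_imset _ _ (pblock P)); last first.
  move=> x y; rewrite !inE => /andP[/exceedingP[_ max_x] _] /andP[/exceedingP[_ max_y] _] eq_xy.
  by apply: max_item_uniq max_x _; rewrite eq_xy.
by apply/subset_leq_card/subsetP => _ /imsetP[x _ ->].
Qed.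

Lemma pruned_bin_exceeding C j : C \in P -> bin_feasible a C ->
  exceeding_item a (C :\: T) j -> K%:R^-1 <= a j.
Proof.
move=> CP feasC [heavy [jCT le_j]]; have /setDP[jC _] := jCT.
have [m [mC le_m]] := max_item_exists jC.
have heavyC : 1 <= \sum_(i in C) a i.
  by apply: le_trans heavy _; apply: ler_sum_subset => // i /setDP[].
have [small_m | large_m] := ltP (a m) K%:R^-1.
  have mT : m \in T.
    rewrite (mem_small_exceeding CP mC) small_m andbT.
    exact/exceedingP/(conj heavyC (conj mC le_m)).
  suff : 1 <= \sum_(i in C | i != m) a i by rewrite leNgt (feasC m (conj mC le_m)).
  apply: le_trans heavy _; apply: ler_sum_subset => // i /setDP[iC iT].
  by apply/andP; split=> //; apply: contraNneq iT => ->.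
suff -> : j = m by [].
apply: max_item_uniq (conj jCT le_j) _; split=> [|i /setDP[iC _]]; last exact: le_m.
by rewrite inE mC andbT (mem_small_exceeding CP mC) ltNge large_m andbF.
Qed.

End SmallExceeding.

Theorem repack_small_exceeding_items (R : realType) (n : nat) (a : 'I_n -> R)
    (K : nat) (P : {set {set 'I_n}}) :
  (0 < K)%N -> (forall i, 0 <= a i) -> oeb_feasible a P ->
  exists P' : {set {set 'I_n}},
    [/\ oeb_feasible a P',
        #|P'|%:R <= (1 + K%:R^-1) * #|P|%:R + 1 :> R &
        forall B, B \in P' -> forall j, exceeding_item a B j -> K%:R^-1 <= a j].
Proof.
move=> K_gt0 a_ge0 [partP feasP]; set T := small_exceeding_items a K P.
have [Q [partQ card_chunks card_Q]] := partition_chunks T K_gt0.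
have [P' [partP' card_P' blocksP']] := graft_partition partP partQ (subsetT T).
have light_chunk B : B \in Q -> \sum_(i in B) a i < 1.
  move=> QB; have /and3P[/eqP coverQ _ Q0] := partQ.
  apply: sum_small_items_lt1 (card_chunks B QB) _ => //.
    by apply: contraNneq Q0 => <-.
  move=> i iB; have : i \in T by rewrite -coverQ; apply/bigcupP; exists B.
  by rewrite inE => /andP[].
exists P'; split.
- split=> // B /blocksP'[/light_chunk light | [C CP ->]].
    exact: bin_feasible_light.
  exact: bin_feasibleS (subsetDl C T) (feasP C CP).
- have card_Q_real : #|Q|%:R <= K%:R^-1 * #|P|%:R + 1 :> R.
    have -> : K%:R^-1 * #|P|%:R + 1 = (#|P| + K)%:R / K%:R :> R.
      by rewrite natrD mulrDl divff ?pnatr_eq0 -?lt0n // mulrC.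
    rewrite ler_pdivlMr ?ltr0n // -natrM ler_nat; apply/ltnW/(leq_trans card_Q).
    by rewrite leq_add2r card_small_exceeding.
  apply: le_trans (_ : (#|P| + #|Q|)%:R <= _); first by rewrite ler_nat.
  by rewrite natrD mulrDl mul1r -addrA lerD2l.
- move=> B /blocksP' [/light_chunk light j [heavy _] | [C CP ->]].
    by rewrite ltNge heavy in light.
  move=> j; exact: (pruned_bin_exceeding (K := K) a_ge0 partP CP (feasP C CP)).
Qed.

Theorem mainTheorem2 (R : realType) (eps : R) (n : nat) (a : 'I_n -> R)
    (OPT : {set {set 'I_n}}) :
  0 < eps ->
  (exists k : nat, (3 <= k)%N /\ eps^-1 = k%:R) ->
  oeb_input a ->
  oeb_optimal a OPT ->
  exists OPT' : {set {set 'I_n}},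
    oeb_feasible a OPT' /\
    (#|OPT'|%:R <= (1 + eps ^+ 2) * #|OPT|%:R + 1) /\
    (forall B, B \in OPT' -> forall j, exceeding_item a B j -> eps ^+ 2 <= a j).
Proof.
move=> _ [k [k_ge3 eps_inv]] input [feasOPT _].
have a_ge0 i : 0 <= a i by case/andP: (input i) => /ltW.
have kk_gt0 : (0 < k * k)%N by rewrite muln_gt0 andbb (leq_trans _ k_ge3).
have -> : eps ^+ 2 = (k * k)%:R^-1.
  by rewrite natrM -eps_inv invfM !invrK expr2.
have [OPT' [feasOPT' cost exceeding]] := repack_small_exceeding_items kk_gt0 a_ge0 feasOPT.
by exists OPT'.
Qed.
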